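(* Let $\{g_k\}_{k\ge1}\subset\mathbb{R}^{+}\cup\{0\}$ be arbitrary, and for $n=1,2,\dots$ define $\Gamma_{(n)}:\mathcal{O}\to\mathcal{O}$ by $$\Gamma_{(n)}\varphi(x)=\frac{\varphi(x)\exp\!\left(x\sum_{k=1}^{n}g_k\right)}{\sum_{y\in E_\varphi}\varphi(y)\exp\!\left(y\sum_{k=1}^{n}g_k\right)},\qquad x\in\mathbb{R}.$$ If the real sequence $\left\{\sum_{k=1}^{n}g_k\right\}_{n\ge1}$ is Cauchy, then for every $\varphi\in\mathcal{O}$ the sequence $\{\Gamma_{(n)}\varphi\}_{n\ge1}$ is a Cauchy sequence in the metric space $(\mathcal{O},d)$.
   Context: A normalized fitness distribution (NFD) is a function $\varphi:\mathbb{R}\to[0,1]$ whose support $E_\varphi=\{x:\varphi(x)\neq0\}$ is finite and which satisfies $\sum_{x\in E_\varphi}\varphi(x)=1$; $\mathcal{O}$ denotes the space of all NFDs. The metric $d$ on $\mathcal{O}$ is $d(\varphi_1,\varphi_2)=\sum_{x\in E_{\varphi_1}\cup E_{\varphi_2}}|\varphi_1(x)-\varphi_2(x)|$. *)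

From Stdlib Require Import Reals List.
Import ListNotations.
Open Scope R_scope.

Definition lsum (s : list R) (f : R -> R) : R := fold_right (fun x acc => f x + acc) 0 s.

(* A normalized fitness distribution: phi : R -> [0,1] with finite support
   E_phi (enumerated without repetition by nfd_supp) and total mass 1. *)
Record NFD := {
  nfd_fun :> R -> R;
  nfd_supp : list R;
  nfd_nodup : NoDup nfd_supp;
  nfd_supp_spec : forall x, nfd_fun x <> 0 <-> In x nfd_supp;
  nfd_range : forall x, 0 <= nfd_fun x <= 1;
  nfd_sum : lsum nfd_supp nfd_fun = 1
}.

Definition supp_union (E1 E2 : list R) : list R :=
  nodup Req_EM_T (E1 ++ E2).

Definition dist_fun (f1 : R -> R) (E1 : list R) (f2 : R -> R) (E2 : list R) : R :=
  lsum (supp_union E1 E2) (fun x => Rabs (f1 x - f2 x)).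

Definition d (p1 p2 : NFD) : R :=
  dist_fun p1 (nfd_supp p1) p2 (nfd_supp p2).

(* Partial sums G n = sum_{k=1}^n g_k  (g indexed from 1; g 0 unused). *)
Definition G (g : nat -> R) (n : nat) : R := sum_f 1 n g.

Definition Gamma (g : nat -> R) (n : nat) (phi : NFD) : R -> R :=
  fun x => phi x * exp (x * G g n) /
           lsum (nfd_supp phi) (fun y => phi y * exp (y * G g n)).

(* The partial sums G_n form a Cauchy sequence of reals, so they converge to
   some L.  For fixed phi, Gamma_(n) phi (x) depends on n only through G_n, and
   t |-> phi x exp (x t) / sum_y phi y exp (y t) is continuous (its denominator
   is a finite sum of positive terms), so every value Gamma_(n) phi (x)
   converges.  The distance d is a sum over the finite support of phi, hence it
   is uniformly small once each of its finitely many terms is. *)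

From Stdlib Require Import Reals List Lra Lia.
Open Scope R_scope.

Lemma lsum_nonneg (s : list R) (f : R -> R) :
  (forall x, In x s -> 0 <= f x) -> 0 <= lsum s f.
Proof.
  induction s as [|a s IH]; intros Hf; simpl; [lra|].
  assert (Ha : 0 <= f a) by (apply Hf; now left).
  assert (Hs : 0 <= lsum s f) by (apply IH; intros; apply Hf; now right).
  lra.
Qed.

Lemma lsum_pos (s : list R) (f : R -> R) :
  s <> nil -> (forall x, In x s -> 0 < f x) -> 0 < lsum s f.
Proof.
  destruct s as [|a s]; intros Hs Hf; [congruence|]; simpl.
  assert (Ha : 0 < f a) by (apply Hf; now left).
  assert (Hrest : 0 <= lsum s f).
  { apply lsum_nonneg; intros; apply Rlt_le, Hf; now right. }
  lra.
Qed.

Lemma continuity_pt_lsum (s : list R) (h : R -> R -> R) (t0 : R) :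
  (forall y, In y s -> continuity_pt (h y) t0) ->
  continuity_pt (fun t => lsum s (fun y => h y t)) t0.
Proof.
  induction s as [|a s IH]; intros Hh; simpl.
  - now apply continuity_pt_const.
  - apply (continuity_pt_plus (h a) (fun t => lsum s (fun y => h y t))).
    + apply Hh; now left.
    + apply IH; intros; apply Hh; now right.
Qed.

Lemma lsum_Rabs_Cauchy (s : list R) (u : nat -> R -> R) :
  (forall x, In x s -> Cauchy_crit (fun n => u n x)) ->
  forall eps, eps > 0 -> exists N : nat, forall m n, (N <= m)%nat -> (N <= n)%nat ->
    lsum s (fun x => Rabs (u m x - u n x)) < eps.
Proof.
  induction s as [|a s IH]; intros Hu eps Heps.
  - exists 0%nat; intros; simpl; lra.
  - destruct (Hu a (or_introl eq_refl) (eps / 2)) as [Na Ha]; [lra|].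
    destruct (IH (fun x Hx => Hu x (or_intror Hx)) (eps / 2)) as [Ns Hs]; [lra|].
    exists (max Na Ns); intros m n Hm Hn; simpl.
    assert (Hhead := Ha m n ltac:(lia) ltac:(lia)); unfold Rdist in Hhead.
    assert (Htail := Hs m n ltac:(lia) ltac:(lia)).
    lra.
Qed.

Definition partition_fun (phi : NFD) (t : R) : R :=
  lsum (nfd_supp phi) (fun y => phi y * exp (y * t)).

Definition tilt (phi : NFD) (t x : R) : R :=
  phi x * exp (x * t) / partition_fun phi t.

Lemma nfd_supp_nonempty (phi : NFD) : nfd_supp phi <> nil.
Proof.
  intros Hnil.
  pose proof (nfd_sum phi) as Hsum.
  rewrite Hnil in Hsum; simpl in Hsum.
  lra.
Qed.

Lemma partition_fun_pos (phi : NFD) (t : R) : 0 < partition_fun phi t.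
Proof.
  apply lsum_pos; [apply nfd_supp_nonempty|].
  intros y Hy.
  apply Rmult_lt_0_compat; [|apply exp_pos].
  pose proof (nfd_range phi y) as Hrange.
  apply (nfd_supp_spec phi y) in Hy.
  lra.
Qed.

Lemma tilt_continuous (phi : NFD) (x t0 : R) :
  continuity_pt (fun t => tilt phi t x) t0.
Proof.
  apply (continuity_pt_div (fun t => phi x * exp (x * t)) (partition_fun phi)).
  - apply derivable_continuous_pt; reg.
  - apply continuity_pt_lsum; intros y _.
    apply derivable_continuous_pt; reg.
  - apply Rgt_not_eq, partition_fun_pos.
Qed.

Theorem theorem1 (g : nat -> R) :
  (forall k, (1 <= k)%nat -> 0 <= g k) ->
  (forall eps, eps > 0 -> exists N : nat, forall m n,
      (1 <= m)%nat -> (1 <= n)%nat -> (N <= m)%nat -> (N <= n)%nat ->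
      Rabs (G g m - G g n) < eps) ->
  forall phi : NFD,
  forall eps, eps > 0 -> exists N : nat, forall m n,
      (1 <= m)%nat -> (1 <= n)%nat -> (N <= m)%nat -> (N <= n)%nat ->
      dist_fun (Gamma g m phi) (nfd_supp phi) (Gamma g n phi) (nfd_supp phi) < eps.
Proof.
  intros _ HG phi eps Heps.
  assert (HGcauchy : Cauchy_crit (G g)).
  { intros e He; destruct (HG e He) as [N HN].
    exists (max N 1); intros n m Hn Hm; apply HN; lia. }
  destruct (R_complete _ HGcauchy) as [L HL].
  assert (HGamma : forall x, Cauchy_crit (fun n => Gamma g n phi x)).
  { intro x; apply CV_Cauchy; exists (tilt phi L x).
    exact (continuity_seq (fun t => tilt phi t x) (G g) L (tilt_continuous phi x L) HL). }
  destruct (lsum_Rabs_Cauchy (supp_union (nfd_supp phi) (nfd_supp phi))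
              (fun n => Gamma g n phi) (fun x _ => HGamma x) eps Heps) as [N HN].
  exists N; intros m n _ _ Hm Hn.
  exact (HN m n Hm Hn).
Qed.
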